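(* Let $(X,+)$ be an uncountable abelian Polish group with a complete metric $d$. Let $\mathcal I\subseteq\mathcal P(X)$ be a proper, translation-invariant $\sigma$-ideal containing singletons and having a Borel base, such that for every Borel set $B\notin\mathcal I$ and every family $\mathcal D\subseteq\mathcal I$ with $|\mathcal D|<\mathfrak c$ we have $|B\setminus\bigcup\mathcal D|=\mathfrak c$, and such that there is $a$ in the range of $d$, $a\neq0$, with $\{y\in X:d(x,y)=a\}\in\mathcal I$ for every $x\in X$. If $\kappa$ is a cardinal with $2^\kappa=\mathfrak c$, then there exists a family $\{B_\xi:\xi<\kappa\}$ of pairwise disjoint subsets of $X$ such that (1) every $B_\xi$ is completely $\mathcal I$-nonmeasurable, (2) no $B_\xi$ is a $2$-covering, and (3) $\{B_\xi:\xi<\kappa\}$ is a $\kappa$-S-covering.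
   Context: $\mathfrak c=|\mathbb R|$. A set $N\subseteq X$ is completely $\mathcal I$-nonmeasurable if for every Borel $A\notin\mathcal I$ both $A\cap N\notin\mathcal I$ and $A\setminus N\notin\mathcal I$. A set $A\subseteq X$ is a $2$-covering if for every $C\subseteq X$ with $|C|=2$ there is $x\in X$ with $C+x\subseteq A$. A family $\mathcal A$ of pairwise disjoint subsets of $X$ is a $\kappa$-S-covering if $|\mathcal A|=\kappa$ and for every $F\subseteq X$ with $|F|=\kappa$ there is $t\in X$ such that $F+t\subseteq\bigcup\mathcal A$ and $|(F+t)\cap A|=1$ for all $A\in\mathcal A$. *)

From HB Require Import structures.
From mathcomp Require Import all_boot all_order all_algebra.
From mathcomp Require Import boolp classical_sets cardinality reals.
Set Implicit Arguments. Unset Strict Implicit. Unset Printing Implicit Defensive.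
Import Order.TTheory GRing.Theory Num.Theory.
Local Open Scope classical_set_scope.
Local Open Scope ring_scope.
Local Open Scope card_scope.

(* The abelian group X is a zmodType; the (complete, compatible) metric d is
   real-valued in an arbitrary realType R; the topology of X is the one
   induced by d.  c = |R| (every realType has the cardinality of the reals). *)

Section Defs.
Variables (R : realType) (X : zmodType) (d : X -> X -> R).

Definition is_metric : Prop :=
  (forall x y, d x y = 0 <-> x = y) /\ (forall x y, d x y = d y x) /\
  (forall x y z, d x z <= d x y + d y z).

Definition d_open (U : set X) : Prop :=
  forall x, U x -> exists e : R, 0 < e /\ [set y | d x y < e] `<=` U.

Definition d_cauchy (u : nat -> X) : Prop :=
  forall e : R, 0 < e -> exists N : nat, forall m n : nat,
    (N <= m)%N -> (N <= n)%N -> d (u m) (u n) < e.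

Definition d_converges (u : nat -> X) : Prop :=
  exists l : X, forall e : R, 0 < e -> exists N : nat, forall n : nat,
    (N <= n)%N -> d (u n) l < e.

Definition d_complete : Prop := forall u, d_cauchy u -> d_converges u.

Definition d_separable : Prop :=
  exists D : set X, countable D /\
    forall x (e : R), 0 < e -> exists y, D y /\ d x y < e.

Definition d_topological_group : Prop :=
  forall x y (e : R), 0 < e -> exists delta : R, 0 < delta /\
    forall x' y', d x x' < delta -> d y y' < delta ->
      d (x - y) (x' - y') < e.

Definition abelian_polish_group_complete_metric : Prop :=
  is_metric /\ d_complete /\ d_separable /\ d_topological_group.

Inductive borel : set X -> Prop :=
  | borel_open U : d_open U -> borel U
  | borel_compl A : borel A -> borel (~` A)
  | borel_cunion (F : nat -> set X) : (forall n, borel (F n)) ->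
      borel (\bigcup_n F n).

End Defs.

Section Ideals.
Variables (X : zmodType).

Definition translate (A : set X) (t : X) : set X := [set a + t | a in A].

Definition sigma_ideal (I : set (set X)) : Prop :=
  (forall A B, I B -> A `<=` B -> I A) /\
  (forall F : nat -> set X, (forall n, I (F n)) -> I (\bigcup_n F n)).

Definition ideal_is_proper (I : set (set X)) : Prop := ~ I setT.

Definition translation_invariant (I : set (set X)) : Prop :=
  forall A t, I A -> I (translate A t).

Definition contains_singletons (I : set (set X)) : Prop :=
  forall x, I [set x].

Definition has_borel_base (B : set X -> Prop) (I : set (set X)) : Prop :=
  forall A, I A -> exists C, B C /\ I C /\ A `<=` C.

Definition completely_nonmeasurable (B : set X -> Prop) (I : set (set X))
  (N : set X) : Prop :=
  forall A, B A -> ~ I A -> ~ I (A `&` N) /\ ~ I (A `\` N).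

Definition two_covering (A : set X) : Prop :=
  forall C : set X, C #= [set: bool] -> exists x, translate C x `<=` A.

Definition pairwise_disjoint_family (F : set (set X)) : Prop :=
  forall A1 A2, F A1 -> F A2 -> A1 <> A2 -> A1 `&` A2 = set0.

(* kappa is represented by the type K *)
Definition kappa_S_covering (K : Type) (F : set (set X)) : Prop :=
  pairwise_disjoint_family F /\ F #= [set: K] /\
  forall E : set X, E #= [set: K] -> exists t : X,
    translate E t `<=` \bigcup_(A in F) A /\
    forall A, F A -> exists x, translate E t `&` A = [set x].

End Ideals.

From HB Require Import structures.
From mathcomp Require Import all_boot all_order all_algebra.
From mathcomp Require Import boolp classical_sets functions cardinality.
From mathcomp Require Import wochoice reals lra.

(* Let c = |R| and let K have cardinality kappa with 2^kappa = c, so that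
   kappa is infinite, kappa < c and kappa x kappa ~ kappa.  There are at most c
   Borel sets and at most c subsets of X of size kappa; list these tasks along
   the initial ordinal of c in a well-ordering of R.  By transfinite recursion
   choose at each stage an injection g : K -> X avoiding the fewer than c
   points chosen so far and their translates by a fixed h <> 0: for a Borel
   task A outside I take the values in A (A minus fewer than c singletons still
   has c points); for a task E take a translate of an enumeration of E (some
   translate misses the fewer than c differences q - e).  The k-th piece
   collects the k-th values of all stages.  Every piece meets every Borel set
   outside I, hence is completely I-nonmeasurable; no piece contains two points
   differing by h, hence none is a 2-covering; and every E of size kappa has a
   translate meeting each piece exactly once. *)

Set Implicit Arguments. Unset Strict Implicit. Unset Printing Implicit Defensive.
Import GRing.Theory Num.Theory.
Local Open Scope classical_set_scope.
Local Open Scope ring_scope.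
Local Open Scope card_scope.

(* [A #<= B] with the injection exposed as an ordinary function; going from
   [#<=] to [injects] needs a default value of the target type. *)
Definition injects T U (A : set T) (B : set U) := exists f : T -> U,
  (forall x, A x -> B (f x)) /\ (forall x y, A x -> A y -> f x = f y -> x = y).

Lemma card_le_injects T U (u0 : U) (A : set T) (B : set U) :
  A #<= B -> injects A B.
Proof.
move/card_leP=> [g].
exists (fun x => if pselect (A x) is left h then val (g (exist _ x (mem_set h))) else u0).
split=> [x Ax|x y Ax Ay]; case: pselect => // hx; first exact: set_mem (valP _).
case: pselect => // hy /val_inj/(@inj _ _ _ g) E.
by case: (E (mem_set I) (mem_set I)).
Qed.

Lemma injects_card_le T U (A : set T) (B : set U) : injects A B -> A #<= B.
Proof.
move=> [f [fAB finj]].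
suff [h] : $|{injfun A >-> B}| by exact: inj_card_le h.
by apply/injfunPex; exists f => // x y /set_mem Ax /set_mem Ay; exact: finj.
Qed.

Lemma card_eq_bijection T U (u0 : U) (A : set T) (B : set U) : A #= B ->
  exists f : T -> U, [/\ forall x, A x -> B (f x),
    forall x y, A x -> A y -> f x = f y -> x = y &
    forall y, B y -> exists2 x, A x & f x = y].
Proof.
move/card_bijP=> [g [g' gK g'K]].
exists (fun x => if pselect (A x) is left h then val (g (exist _ x (mem_set h))) else u0).
split=> [x Ax|x y Ax Ay|y By].
- by case: pselect => // h; exact: set_mem (valP _).
- case: pselect => // hx; case: pselect => // hy.
  by move/val_inj/(can_inj gK); case.
- pose b : B := exist _ y (mem_set By).
  exists (val (g' b)); first exact: set_mem (valP _).
  case: pselect => h; last by exfalso; apply: h; exact: set_mem (valP _).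
  have -> : exist _ (val (g' b)) (mem_set h) = g' b by apply: val_inj.
  by rewrite g'K.
Qed.

Lemma injects_card_eq T U (A : set T) (B : set U) :
  injects A B -> injects B A -> A #= B.
Proof. by move=> AB BA; apply: Cantor_Bernstein; apply: injects_card_le. Qed.

Lemma injects_refl T (A : set T) : injects A A.
Proof. by exists id. Qed.

Lemma injects_trans T U V (A : set T) (B : set U) (C : set V) :
  injects A B -> injects B C -> injects A C.
Proof.
move=> [f [fAB finj]] [g [gBC ginj]]; exists (g \o f).
split=> [x Ax|x y Ax Ay /= e]; first exact/gBC/fAB.
by apply: finj => //; apply: ginj => //; apply: fAB.
Qed.

Lemma injects_sub T (A B : set T) : A `<=` B -> injects A B.
Proof. by move=> AB; exists id; split=> // x /AB. Qed.

Lemma injects_image T U (t0 : T) (f : T -> U) (A : set T) : injects (f @` A) A.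
Proof.
have /choice [g Hg] : forall y, exists x, (f @` A) y -> A x /\ f x = y.
  move=> y; case: (pselect ((f @` A) y)) => [[x Ax fx]|nfy]; first by exists x.
  by exists t0.
exists g; split=> [y /Hg []//|y y' /Hg [_ e1] /Hg [_ e2] e].
by move: e1 e2; rewrite e => -> ->.
Qed.

Lemma injectsX T1 T2 U1 U2 (A1 : set T1) (A2 : set T2) (B1 : set U1) (B2 : set U2) :
  injects A1 B1 -> injects A2 B2 -> injects (A1 `*` A2) (B1 `*` B2).
Proof.
move=> [f [fAB finj]] [g [gAB ginj]]; exists (fun p => (f p.1, g p.2)).
split=> [[x y] [/= Ax Ay]|[x y] [x' y'] [/= Ax Ay] [/= Ax' Ay'] [e1 e2]].
  by split; [apply: fAB | apply: gAB].
by rewrite (finj _ _ Ax Ax' e1) (ginj _ _ Ay Ay' e2).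
Qed.

Lemma injects_powerset T U : injects [set: T] [set: U] ->
  injects [set: set T] [set: set U].
Proof.
move=> [f [_ finj]]; exists (image^~ f); split=> // S S' _ _ e.
have fS S1 S2 x : f @` S1 = f @` S2 -> S1 x -> S2 x.
  move=> e12 S1x; have : (f @` S2) (f x) by rewrite -e12; exists x.
  by move=> [x' S2x' /(finj _ _ I I) <-].
by apply/seteqP; split=> x; apply: fS.
Qed.

Lemma powerset_not_injects T (A : set T) : ~ injects [set: set T] A.
Proof.
case=> f [_ finj]; pose D := [set k | exists S, f S = k /\ ~ S k].
have [DfD|nDfD] := pselect (D (f D)); last by apply: (nDfD); exists D; split.
by have [S [e]] := DfD; rewrite (finj S D I I e).
Qed.

Lemma finite_set_injects T (A : set T) : finite_set A <-> ~ injects [set: nat] A.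
Proof.
split=> [fA /injects_card_le|nA]; first by move/infiniteP; apply.
apply: contrapT => infA; have [a _] := infinite_setN0 infA.
by apply: nA; apply: (card_le_injects a); apply/infiniteP.
Qed.

Definition gdom T U (G : set (T * U)) := [set x | exists y, G (x, y)].

Definition functional T U (G : set (T * U)) :=
  forall x y y', G (x, y) -> G (x, y') -> y = y'.

Definition transpose T U (G : set (T * U)) : set (U * T) := [set p | G (p.2, p.1)].

Definition partial_inj T U (A : set T) (B : set U) (G : set (T * U)) :=
  [/\ G `<=` A `*` B, functional G & functional (transpose G)].

Section PartialInjections.
Variables (T U : Type) (A : set T) (B : set U).

Lemma partial_inj_transpose G : partial_inj A B G -> partial_inj B A (transpose G).
Proof. by case=> GAB Gf Gi; split=> // -[y x] /GAB []. Qed.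

Lemma partial_inj_chain (F : set (set (T * U))) :
  F `<=` partial_inj A B -> total_on F subset -> partial_inj A B (\bigcup_(G in F) G).
Proof.
move=> FP Ftot.
have upper G1 G2 : F G1 -> F G2 -> exists G, [/\ F G, G1 `<=` G & G2 `<=` G].
  by move=> F1 F2; case: (Ftot G1 G2 F1 F2) => s; [exists G2 | exists G1]; split.
split.
- by move=> p [G FG Gp]; case: (FP G FG) => + _ _; apply.
- move=> x y y' [G1 F1 h1] [G2 F2 h2]; have [G [FG s1 s2]] := upper _ _ F1 F2.
  by case: (FP G FG) => _ Gf _; exact: Gf (s1 _ h1) (s2 _ h2).
- move=> y x x' [G1 F1 h1] [G2 F2 h2]; have [G [FG s1 s2]] := upper _ _ F1 F2.
  by case: (FP G FG) => _ _ Gi; exact: Gi (s1 _ h1) (s2 _ h2).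
Qed.

Lemma partial_inj_injects (u0 : U) G :
  partial_inj A B G -> A `<=` gdom G -> injects A B.
Proof.
case=> GAB _ Gi AG; have /choice [f Hf] : forall x, exists y, A x -> G (x, y).
  move=> x; have [/AG [y Gy]|nAx] := pselect (A x); first by exists y.
  by exists u0 => /nAx.
exists f; split=> [x /Hf /GAB []//|x x' /Hf h1 /Hf h2 e].
by rewrite -e in h2; exact: Gi h1 h2.
Qed.

Lemma partial_inj_add G a b : partial_inj A B G -> A a -> B b ->
  ~ gdom G a -> ~ gdom (transpose G) b -> partial_inj A B (G `|` [set (a, b)]).
Proof.
case=> GAB Gf Gi Aa Bb na nb; split.
- by move=> p [/GAB //|->].
- move=> x y y' [h1|[ex ey]] [h2|[ex' ey']]; subst; first exact: Gf h1 h2.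
  + by case: na; exists y.
  + by case: na; exists y'.
  + by [].
- move=> y x x' [h1|[ex ey]] [h2|[ex' ey']]; subst; first exact: Gi h1 h2.
  + by case: nb; exists x.
  + by case: nb; exists x'.
  + by [].
Qed.

End PartialInjections.

Lemma injects_total T U (t0 : T) (u0 : U) (A : set T) (B : set U) :
  injects A B \/ injects B A.
Proof.
have [G [PG Gmax]] : exists G, partial_inj A B G /\ forall G', G `<` G' -> ~ partial_inj A B G'.
  by apply: Zorn_bigcup; exact: partial_inj_chain.
have [AG|/nonsubset [a [Aa /= na]]] := pselect (A `<=` gdom G).
  by left; exact (partial_inj_injects u0 PG AG).
have [BG|/nonsubset [b [Bb /= nb]]] := pselect (B `<=` gdom (transpose G)).
  by right; exact (partial_inj_injects t0 (partial_inj_transpose PG) BG).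
exfalso; apply: Gmax (partial_inj_add PG Aa Bb na nb).
split=> [p Gp|/(_ (a, b) (or_intror erefl)) Gab]; first by left.
by apply: na; exists b.
Qed.

(* The condition on [G0] is vacuous for the empty graph
   so that the union of an empty chain qualifies. *)
Definition pairing T (A : set T) (G0 G : set (T * (T * T))) :=
  [/\ functional G, functional (transpose G), gdom G `<=` A,
      forall y, gdom (transpose G) y <-> (gdom G `*` gdom G) y &
      G = set0 \/ G0 `<=` G].

Section Hessenberg.
Variables (T : Type) (A : set T).

Lemma pairing_chain G0 (F : set (set (T * (T * T)))) :
  F `<=` pairing A G0 -> total_on F subset -> pairing A G0 (\bigcup_(G in F) G).
Proof.
move=> FP Ftot.
have upper G1 G2 : F G1 -> F G2 -> exists G, [/\ F G, G1 `<=` G & G2 `<=` G].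
  by move=> F1 F2; case: (Ftot G1 G2 F1 F2) => s; [exists G2 | exists G1]; split.
split.
- move=> x y y' [G1 F1 h1] [G2 F2 h2]; have [G [FG s1 s2]] := upper _ _ F1 F2.
  by case: (FP G FG) => Gf _ _ _ _; exact: Gf (s1 _ h1) (s2 _ h2).
- move=> y x x' [G1 F1 h1] [G2 F2 h2]; have [G [FG s1 s2]] := upper _ _ F1 F2.
  by case: (FP G FG) => _ Gi _ _ _; exact: Gi (s1 _ h1) (s2 _ h2).
- by move=> x [y [G FG h]]; case: (FP G FG) => _ _ GA _ _; apply: GA; exists y.
- move=> [a b]; split.
    move=> [x [G FG h]]; case: (FP G FG) => _ _ _ Gr _.
    have [[y1 h1] [y2 h2]] := (Gr (a, b)).1 (ex_intro _ x h).
    by split; [exists y1 | exists y2]; exists G.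
  move=> [[y1 [G1 F1 h1]] [y2 [G2 F2 h2]]] /=.
  have [G [FG s1 s2]] := upper _ _ F1 F2; case: (FP G FG) => _ _ _ Gr _.
  have [x hx] := (Gr (a, b)).2 (conj (ex_intro _ y1 (s1 _ h1)) (ex_intro _ y2 (s2 _ h2))).
  by exists x; exists G.
- have [[G FG [p Gp]]|F0] := pselect (exists2 G, F G & G !=set0).
    case: (FP G FG) => _ _ _ _ [G0e|sG0]; first by move: Gp; rewrite G0e.
    by right=> q /sG0 Gq; exists G.
  left; apply/seteqP; split=> // p [G FG Gp].
  by apply: F0; exists G => //; exists p.
Qed.

Lemma pairing_seed (i : nat -> T) : (forall n, A (i n)) -> injective i ->
  exists G0, pairing A G0 G0 /\ forall n, gdom G0 (i n).
Proof.
move=> iA iinj.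
have [pi [_ piinj pisurj]] := card_eq_bijection (0, 0)%N (card_esym card_nat2).
pose G0 := [set p | exists n, p = (i n, (i (pi n).1, i (pi n).2))].
have G0i n : gdom G0 (i n) by exists (i (pi n).1, i (pi n).2), n.
exists G0; split=> //; split=> //.
- by move=> x y y' [n [-> ->]] [m [/iinj <- ->]].
- move=> y x x' [n [-> ->]] [m [-> /iinj e1 /iinj e2]].
  by rewrite (piinj n m I I); last by move: (pi n) (pi m) e1 e2 => [? ?] [? ?] /= -> ->.
- by move=> x [y [n [-> _]]]; apply: iA.
- move=> [a b]; split=> [[x [n [_ -> ->]]]|[[y1 [n [-> _]]] [y2 [m [-> _]]]]].
    by split; apply: G0i.
  by have [k _ e] := pisurj (n, m) I; exists (i k), k; rewrite e.
- by right.
Qed.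

Lemma pairing_square_injects G0 G :
  pairing A G0 G -> injects (gdom G `*` gdom G) (gdom G).
Proof.
case=> Gf _ _ Gr _.
have /choice [e He] : forall y, exists x, (gdom G `*` gdom G) y -> G (x, y).
  move=> y; have [/Gr [z Gz]|ny] := pselect ((gdom G `*` gdom G) y); first by exists z.
  by exists y.1 => /ny.
exists e; split=> [y /He Gy|y y' /He h1 /He h2 ee]; first by exists y.
by rewrite -ee in h2; exact: Gf h1 h2.
Qed.

Lemma injects_setU_square (M N : set T) (m0 m1 : T) :
  M m0 -> M m1 -> m0 <> m1 ->
  injects (M `*` M) M -> injects N M -> injects (M `|` N) M.
Proof.
move=> Mm0 Mm1 m01 MM [f [fNM finj]]; apply: injects_trans MM.
exists (fun x => if pselect (M x) then (x, m0) else (f x, m1)); split.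
  by move=> x MNx; case: pselect => Mx; split=> //=; apply: fNM; case: MNx.
move=> x y MNx MNy; case: pselect => Mx; case: pselect => My /pair_equal_spec [e1 e2].
- exact: e1.
- by case: m01.
- by case: m01.
- by apply: finj e1; [case: MNx | case: MNy].
Qed.

Lemma pairing_extend G0 G (N : set T) (g : T -> T * T) :
  pairing A G0 G -> G0 `<=` G -> N `<=` A -> (forall x, N x -> ~ gdom G x) ->
  let M := gdom G in let U := (M `|` N) `*` (M `|` N) `\` M `*` M in
  (forall x, N x -> U (g x)) -> (forall x y, N x -> N y -> g x = g y -> x = y) ->
  (forall y, U y -> exists2 x, N x & g x = y) ->
  pairing A G0 (G `|` [set p | N p.1 /\ p.2 = g p.1]).
Proof.
move=> [Gf Gi GA Gr _] G0G NA NM M U gU ginj gsurj.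
have domG' z : gdom (G `|` [set p | N p.1 /\ p.2 = g p.1]) z <-> (M `|` N) z.
  split=> [[y [Gzy|[Nz _]]]|[[y Gzy]|Nz]]; [by left; exists y | by right | |].
  - by exists y; left.
  - by exists (g z); right.
have GM x y : G (x, y) -> (M `*` M) y by move=> Gxy; apply/Gr; exists x.
split.
- move=> x y y' [h1|[/= Nx ->]] [h2|[/= Nx' ->]] //; first exact: Gf h1 h2.
  + by case: (NM x Nx'); exists y.
  + by case: (NM x Nx); exists y'.
- move=> y x x' [h1|[/= Nx ->]] [h2|[/= Nx' e]].
  + exact: Gi h1 h2.
  + by exfalso; case: (gU x' Nx') => _; apply; rewrite -e; exact: GM h1.
  + by exfalso; case: (gU x Nx) => _; apply; exact: GM h2.
  + exact: ginj.
- by move=> x /domG' [/GA|/NA].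
- move=> y; split=> [[x [/GM [My1 My2]|[/= Nx ->]]]|[/domG' y1 /domG' y2]].
    by split; apply/domG'; left.
  + by case: (gU x Nx) => -[g1 g2] _; split; apply/domG'.
  have [MMy|nMMy] := pselect ((M `*` M) y).
    by have [x Gx] := (Gr y).2 MMy; exists x; left.
  by have [x Nx gx] := gsurj y (conj (conj y1 y2) nMMy); exists x; right.
- by right=> p /G0G; left.
Qed.

Lemma pairing_grow G0 G (f : T -> T) (m0 m1 : T) :
  pairing A G0 G -> G0 `<=` G -> gdom G m0 -> gdom G m1 -> m0 <> m1 ->
  (forall x, gdom G x -> (A `\` gdom G) (f x)) ->
  (forall x y, gdom G x -> gdom G y -> f x = f y -> x = y) ->
  exists2 G', G `<` G' & pairing A G0 G'.
Proof.
move=> PG G0G Mm0 Mm1 m01 fN finj; set M := gdom G.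
pose N := f @` M; have NA x : N x -> A x /\ ~ M x by move=> [y My <-]; apply: fN.
have MNM : injects (M `|` N) M.
  by apply: injects_setU_square Mm0 Mm1 m01 (pairing_square_injects PG) (injects_image m0 f M).
pose U := (M `|` N) `*` (M `|` N) `\` M `*` M.
have NU : injects N U.
  exists (fun x => (x, x)); split=> [x Nx|x y _ _ [] //].
  by split; [split; right | move=> [/(NA x Nx).2]].
have UN : injects U N.
  apply: injects_trans (injects_sub (@subDsetl _ _ _)) (injects_trans (injectsX MNM MNM) _).
  apply: injects_trans (pairing_square_injects PG) _.
  by exists f; split=> // x Mx; exists x.
have [g [gU ginj gsurj]] := card_eq_bijection (m0, m0) (injects_card_eq NU UN).
exists (G `|` [set p | N p.1 /\ p.2 = g p.1]); last first.
  by apply: pairing_extend => // x /NA [].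
split=> [p|]; first by left.
have Nf : N (f m0) by exists m0.
by move/(_ (f m0, g (f m0))) => h; apply: (NA _ Nf).2; exists (g (f m0)); apply: h; right.
Qed.

Lemma injects_square : injects [set: nat] A -> injects (A `*` A) A.
Proof.
move=> [i [iA iinj]]; have {}iA n : A (i n) by apply: iA.
have {}iinj : injective i by move=> n m; apply: iinj.
have [G0 [PG0 G0i]] := pairing_seed iA iinj.
have [G [PG Gmax]] : exists G, pairing A G0 G /\ forall G', G `<` G' -> ~ pairing A G0 G'.
  by apply: Zorn_bigcup => F FP Ftot; exact: pairing_chain.
have G0G : G0 `<=` G.
  case: (PG) => _ _ _ _ [G0e|//]; exfalso; apply: (Gmax G0) => //; rewrite G0e.
  by split=> // G00; have [y /G00] := G0i 0%N.
set M := gdom G; have MA : M `<=` A by case: PG.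
have iM n : M (i n) by have [y /G0G Gy] := G0i n; exists y.
have i01 : i 0%N <> i 1%N by move/iinj.
case: (injects_total (i 0%N) (i 0%N) (A `\` M) M) => [AM|[f [fN finj]]].
  have AM' : injects A M.
    apply: injects_trans (injects_setU_square (iM 0%N) (iM 1%N) i01 (pairing_square_injects PG) AM).
    by apply: injects_sub => x Ax; have [Mx|nMx] := pselect (M x); [left | right].
  apply: injects_trans (injectsX AM' AM') (injects_trans (pairing_square_injects PG) _).
  exact: injects_sub MA.
have [G' GG' PG'] := pairing_grow PG G0G (iM 0%N) (iM 1%N) i01 fN finj.
by case: (Gmax _ GG' PG').
Qed.

End Hessenberg.

Lemma nat_injects_real (R : realType) : injects [set: nat] [set: R].
Proof. by exists (GRing.natmul 1); split=> // m n _ _ /eqP; rewrite eqr_nat => /eqP. Qed.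

Lemma powerset_injects_infinite (R : realType) (K : Type) :
  injects [set: R] [set: set K] -> injects [set: nat] [set: K].
Proof.
move=> RK; apply: contrapT => /finite_set_injects /finite_setP [n KI].
have [be [beI beinj _]] := card_eq_bijection 0%N KI.
pose code (S : set K) := [ffun i : 'I_n => `[< exists2 k, S k & be k = i >]].
have code_inj S S' : code S = code S' -> S `<=` S'.
  move=> e k Sk; have bk : (be k < n)%N by apply: beI.
  have := congr1 (fun f : {ffun 'I_n -> bool} => f (Ordinal bk)) e; rewrite !ffunE /=.
  have -> : `[< exists2 k0, S k0 & be k0 = be k >] = true by apply/asboolP; exists k.
  by move/esym/asboolP => [k' S'k' /beinj ek]; rewrite -(ek I I).
have : injects [set: R] [set: {ffun 'I_n -> bool}].
  apply: injects_trans RK _; exists code; split=> // S S' _ _ e.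
  by apply/seteqP; split; apply: code_inj.
move/injects_card_le/card_le_finite/(_ finite_finset).
by move/finite_set_injects; apply; exact: nat_injects_real.
Qed.

(* [E] is coded by the relation [k ~ k' <-> iota (phi_E k) k'], where [phi_E]
   enumerates [E] and [iota : T -> set K] is injective. *)
Lemma card_eq_sets_injects T (K : Type) (x0 : T) : injects [set: T] [set: set K] ->
  injects [set E : set T | E #= [set: K]] [set: set (K * K)].
Proof.
move=> [iota [_ iinj]].
have /choice [phi Hphi] : forall E : set T, exists phi : K -> T, E #= [set: K] ->
    (forall k, E (phi k)) /\ (forall y, E y -> exists k, phi k = y).
  move=> E; have [EK|nEK] := pselect (E #= [set: K]); last by exists (fun=> x0).
  have [f [fE _ fsurj]] := card_eq_bijection x0 (card_esym EK).
  by exists f => _; split=> [k|y /fsurj [k _ <-]]; [exact: fE | exists k].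
exists (fun E => [set p : K * K | iota (phi E p.1) p.2]); split=> // E E' EK E'K e.
have ephi k : phi E k = phi E' k.
  apply: iinj => //; apply/seteqP; split=> k' h.
    by have : [set p : K * K | iota (phi E p.1) p.2] (k, k') by []; rewrite e.
  by have : [set p : K * K | iota (phi E' p.1) p.2] (k, k') by []; rewrite -e.
have [_ EE] := Hphi E EK; have [_ EE'] := Hphi E' E'K.
apply/seteqP; split=> y; [move=> /EE [k <-]; rewrite ephi | move=> /EE' [k <-]; rewrite -ephi].
- exact: (Hphi E' E'K).1.
- exact: (Hphi E EK).1.
Qed.

Lemma tagged_injects (R : realType) T (A B : set T) :
  injects A [set: R] -> injects B [set: R] ->
  injects [set p : bool * T | if p.1 then A p.2 else B p.2] [set: R].
Proof.
move=> [fA [_ fAinj]] [fB [_ fBinj]].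
have [pr [_ prinj]] := injects_square (nat_injects_real R).
exists (fun p => if p.1 then pr (1, fA p.2) else pr (0, fB p.2)).
split=> // -[[] x] [[] y] /= hx hy.
- by move/(prinj _ _ (conj I I) (conj I I)) => [/(fAinj _ _ hx hy) ->].
- by move/(prinj _ _ (conj I I) (conj I I)) => [/eqP]; rewrite oner_eq0.
- by move/(prinj _ _ (conj I I) (conj I I)) => [/esym/eqP]; rewrite oner_eq0.
- by move/(prinj _ _ (conj I I) (conj I I)) => [/(fBinj _ _ hx hy) ->].
Qed.

Lemma continuum_exponent (R : realType) (K : Type) : [set: set K] #= [set: R] ->
  [/\ injects [set: nat] [set: K], injects [set: K] [set: R] & ~ injects [set: R] [set: K]].
Proof.
case/card_eqPle => /(card_le_injects 0) PK_R /(card_le_injects set0) R_PK.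
split; first exact: powerset_injects_infinite R_PK.
  apply: injects_trans PK_R; exists set1; split=> // x y _ _ e.
  by have : [set x] x by []; rewrite e.
by move=> RK; apply: (@powerset_not_injects K setT); exact: injects_trans PK_R RK.
Qed.

Section SmallSets.
Variables (V : Type) (C : set V).
Hypothesis C_infinite : injects [set: nat] C.

Lemma finite_not_injects T (A : set T) : finite_set A -> ~ injects C A.
Proof. by move=> /finite_set_injects fA CA; exact: fA (injects_trans C_infinite CA). Qed.

Lemma not_injects_setX T U (t0 : T) (u0 : U) (A : set T) (B : set U) :
  ~ injects C A -> ~ injects C B -> ~ injects C (A `*` B).
Proof.
move=> CA CB CAB.
wlog AB : T U t0 u0 A B CA CB CAB / injects A B.
  move=> gen; case: (injects_total t0 u0 A B) => [AB|BA]; first exact: (gen _ _ t0 u0 A B).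
  apply: (gen _ _ u0 t0 B A CB CA _ BA); apply: injects_trans CAB _.
  by exists (fun p => (p.2, p.1)); split=> [[x y] [] | [x y] [x' y'] _ _ [-> ->]].
have [nB|/finite_set_injects fB] := pselect (injects [set: nat] B).
  apply: CB; apply: injects_trans CAB (injects_trans (injectsX AB (injects_refl B)) _).
  exact: injects_square.
have fA := card_le_finite (injects_card_le AB) fB.
exact: finite_not_injects (finite_setX fA fB) CAB.
Qed.

End SmallSets.

Definition strict_well_order T (lt : T -> T -> Prop) :=
  [/\ forall x, ~ lt x x, forall x y z, lt x y -> lt y z -> lt x z,
      forall x y, lt x y \/ x = y \/ lt y x &
      forall S : set T, S !=set0 -> exists z, S z /\ forall x, S x -> ~ lt x z].

Section WellOrder.
Variables (T : eqType) (R : rel T).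
Hypothesis Rwo : well_order R.

Lemma well_order_min (S : set T) : S !=set0 ->
  exists z, S z /\ forall x, S x -> R z x.
Proof.
move=> [x Sx]; have [|z [[Sz lbz] _]] := @Rwo [pred y | `[< S y >]].
  by exists x; rewrite unfold_in; apply/asboolP.
exists z; split=> [|y Sy]; first by move: Sz; rewrite unfold_in => /asboolP.
by apply: lbz; rewrite unfold_in; apply/asboolP.
Qed.

Lemma well_order_refl x : R x x.
Proof. by have [z [-> lz]] := well_order_min (ex_intro _ x (erefl x)); apply: lz. Qed.

Lemma well_order_total x y : R x y \/ R y x.
Proof.
have [z [[->|->] lz]] := well_order_min (ex_intro _ x (or_introl (erefl x)) : [set x; y] !=set0).
  by left; apply: lz; right.
by right; apply: lz; left.
Qed.

Lemma well_order_anti x y : R x y -> R y x -> x = y.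
Proof.
move=> xy yx; have [|z [_ zuniq]] := @Rwo (pred2 x y); first by exists x; rewrite !inE eqxx.
have minP w : w = x \/ w = y -> minimum_of R (pred2 x y) w.
  move=> wxy; split; first by case: wxy => ->; rewrite !inE eqxx ?orbT.
  by move=> u; rewrite !inE => /orP[] /eqP ->; case: wxy => ->; rewrite ?well_order_refl.
by rewrite -(zuniq x (minP x (or_introl erefl))) (zuniq y (minP y (or_intror erefl))).
Qed.

Lemma well_order_trans x y z : R x y -> R y z -> R x z.
Proof.
move=> xy yz; have [w [[[->|->]|->] lw]] :=
  well_order_min (ex_intro _ x (or_introl (or_introl (erefl x))) : [set x; y; z] !=set0).
- by apply: lw; right.
- by rewrite (well_order_anti xy (lw x (or_introl (or_introl erefl)))).
- by rewrite -(well_order_anti yz (lw y (or_introl (or_intror erefl)))).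
Qed.

End WellOrder.

Lemma strict_well_order_exists (T : eqType) :
  exists lt : T -> T -> Prop, strict_well_order lt.
Proof.
have [R Rwo] := well_ordering_principle T.
exists (fun x y => R x y /\ x <> y).
split=> [x [] // | x y z [xy nxy] [yz nyz] | x y | S /(well_order_min Rwo) [z [Sz zmin]]].
- split; first exact: well_order_trans xy yz.
  by move=> exz; apply: nyz; apply: (well_order_anti Rwo) => //; rewrite -exz.
- have [->|nxy] := pselect (x = y); first by right; left.
  by case: (well_order_total Rwo x y) => h; [left | right; right]; split=> // /esym.
- exists z; split=> // x Sx [xz nxz]; apply: nxz.
  by apply: (well_order_anti Rwo) => //; apply: zmin.
Qed.

Section InitialSegment.
Variables (T : Type) (lt : T -> T -> Prop).
Hypothesis ltwo : strict_well_order lt.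

(* The initial ordinal of [|T|] inside the well-order [lt]. *)
Definition short_prefix a := ~ injects [set: T] [set b | lt b a].

Lemma short_prefix_down a b : short_prefix a -> lt b a -> short_prefix b.
Proof.
case: ltwo => _ lttr _ _ Sa ba Rb; apply: Sa; apply: injects_trans Rb (injects_sub _).
by move=> c /= cb; apply: lttr cb ba.
Qed.

Lemma short_prefix_injects : injects [set: T] short_prefix.
Proof.
case: ltwo => _ _ _ ltwf.
have [[a0 na0]|allS] := pselect (exists a, ~ short_prefix a); last first.
  by apply: injects_sub => a _; apply: contrapT => na; apply: allS; exists a.
have [a [na amin]] := ltwf [set a | ~ short_prefix a] (ex_intro _ a0 na0).
apply: injects_trans (contrapT na) (injects_sub _) => b ba; apply: contrapT => nb.
exact: amin b nb ba.
Qed.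

End InitialSegment.

Section Transfinite.
Variables (I V : Type) (lt : I -> I -> Prop) (W : set I).
Variable step : I -> set (I * V) -> V -> Prop.
Hypotheses (ltwo : strict_well_order lt) (W_down : forall a b, W a -> lt b a -> W b).
Hypothesis step_exists : forall a (H : set (I * V)),
  W a -> functional H -> gdom H = [set b | lt b a] -> exists v, step a H v.

Definition below (G : set (I * V)) a := [set p | G p /\ lt p.1 a].

Definition attempt (G : set (I * V)) := [/\ functional G, gdom G `<=` W,
  forall a b, gdom G a -> lt b a -> gdom G b &
  forall a v, G (a, v) -> step a (below G a) v].

Lemma attempt_chain (F : set (set (I * V))) :
  F `<=` attempt -> total_on F subset -> attempt (\bigcup_(G in F) G).
Proof.
move=> FP Ftot.
have below_bigcup G1 a : F G1 -> gdom G1 a ->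
    below (\bigcup_(G in F) G) a = below G1 a.
  move=> F1 da; apply/seteqP; split=> [[b w] [[G2 F2 h2] /= lba]|p [h1 h2]]; last first.
    by split=> //; exists G1.
  split=> //=; case: (Ftot G1 G2 F1 F2) => s; last exact: s.
  case: (FP G1 F1) => _ _ G1d _; case: (FP G2 F2) => G2f _ _ _.
  by have [w' hw'] := G1d a b da lba; rewrite (G2f _ _ _ h2 (s _ hw')).
split.
- move=> x y y' [G1 F1 h1] [G2 F2 h2]; case: (Ftot G1 G2 F1 F2) => s.
    by case: (FP G2 F2) => G2f _ _ _; exact: G2f (s _ h1) h2.
  by case: (FP G1 F1) => G1f _ _ _; exact: G1f h1 (s _ h2).
- by move=> a [y [G1 F1 h1]]; case: (FP G1 F1) => _ G1W _ _; apply: G1W; exists y.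
- move=> a b [y [G1 F1 h1]] lba; case: (FP G1 F1) => _ _ G1d _.
  by have [w hw] := G1d a b (ex_intro _ y h1) lba; exists w, G1.
- move=> a v [G1 F1 h1]; rewrite (below_bigcup G1 a F1 (ex_intro _ v h1)).
  by case: (FP G1 F1) => _ _ _ G1s; apply: G1s.
Qed.

Lemma attempt_extend G a v : attempt G -> W a -> gdom G = [set b | lt b a] ->
  step a G v -> attempt (G `|` [set (a, v)]).
Proof.
case: ltwo => ltirr lttr _ _ [Gf GW Gd Gs] Wa domG sv.
have na : ~ gdom G a by rewrite domG; apply: ltirr.
have dG' b : gdom (G `|` [set (a, v)]) b -> gdom G b \/ b = a.
  by move=> [w [h|[-> _]]]; [left; exists w | right].
have below_ext b : gdom G b \/ b = a -> below (G `|` [set (a, v)]) b = below G b.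
  move=> db; apply/seteqP.
  split=> [[c w] [[h|[-> _]] /= lcb]|p [h1 h2]]; [by split | | by split=> //; left].
  exfalso; apply: (ltirr a); case: db => [|eba]; last by rewrite -{2}eba.
  by rewrite domG => /(lttr _ _ _ lcb).
split.
- move=> x y y' [h1|h1] [h2|h2].
  + exact: Gf h1 h2.
  + by case: h2 => ex _; exfalso; apply: na; rewrite -ex; exists y.
  + by case: h1 => ex _; exfalso; apply: na; rewrite -ex; exists y'.
  + by case: h1 => _ ->; case: h2 => _ ->.
- by move=> b /dG' [/GW //|->].
- move=> b c /dG' [db|->] lcb; first by have [w hw] := Gd b c db lcb; exists w; left.
  by move: lcb; rewrite -[lt c a]/([set b | lt b a] c) -domG => -[w hw]; exists w; left.
- move=> b w [h|[-> ->]]; rewrite below_ext; [exact: Gs | by left; exists w | | by right].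
  suff -> : below G a = G by [].
  apply/seteqP; split=> [p []//|[c w'] h]; split=> //=.
  by rewrite -[lt c a]/([set b | lt b a] c) -domG; exists w'.
Qed.

Lemma transfinite_recursion : exists G : set (I * V),
  [/\ functional G, gdom G = W & forall a v, G (a, v) -> step a (below G a) v].
Proof.
have [G [[Gf GW Gd Gs] Gmax]] : exists G, attempt G /\ forall G', G `<` G' -> ~ attempt G'.
  by apply: Zorn_bigcup; exact: attempt_chain.
exists G; split=> //; apply/seteqP; split=> // a0 Wa0; apply: contrapT => na0.
case: ltwo => _ _ lttri ltwf.
have [a [[Wa na] amin]] := ltwf [set x | W x /\ ~ gdom G x] (ex_intro _ a0 (conj Wa0 na0)).
have domG : gdom G = [set b | lt b a].
  apply/seteqP; split=> b; last first.
    by move=> lba; apply: contrapT => nb; apply: (amin b) => //; split=> //; apply: W_down lba.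
  move=> db; case: (lttri b a) => [//|[eba|lab]]; first by rewrite eba in db.
  by exfalso; apply: na; apply: Gd db lab.
have [v sv] := step_exists Wa Gf domG.
apply: (Gmax (G `|` [set (a, v)])); last exact: attempt_extend.
split; first by move=> p h; left.
by move=> /(_ (a, v) (or_intror erefl)) h; apply: na; exists v.
Qed.

End Transfinite.

Inductive borel_code :=
  | CodeOpen of set nat
  | CodeCompl of borel_code
  | CodeUnion of (nat -> borel_code).

Fixpoint code_set T (basis : nat -> set T) (c : borel_code) : set T :=
  match c with
  | CodeOpen s => \bigcup_(n in s) basis n
  | CodeCompl c' => ~` code_set basis c'
  | CodeUnion F => \bigcup_n code_set basis (F n)
  end.

(* A code is determined by the labels of the nodes of its tree, nodes being
   addressed by the sequence of branches leading to them. *)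
Fixpoint code_label (c : borel_code) (p : seq nat) : nat * set nat :=
  match c, p with
  | CodeOpen s, [::] => (0%N, s)
  | CodeOpen _, _ :: _ => (3%N, set0)
  | CodeCompl _, [::] => (1%N, set0)
  | CodeCompl c', _ :: p' => code_label c' p'
  | CodeUnion _, [::] => (2%N, set0)
  | CodeUnion F, n :: p' => code_label (F n) p'
  end.

Lemma code_label_inj : injective code_label.
Proof.
elim=> [s|c IH|F IH] [s'|c'|F'] e; have /= e0 := congr1 (fun f => f [::]) e;
  try by case: e0.
- by case: e0 => ->.
- by congr CodeCompl; apply/IH/funext => p; exact: (congr1 (fun f => f (0%N :: p)) e).
- congr CodeUnion; apply/funext => n; apply/IH/funext => p.
  exact: (congr1 (fun f => f (n :: p)) e).
Qed.

Definition labels_set (L : seq nat -> nat * set nat) : set nat :=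
  [set m | exists p b k, m = pickle (p, b, k) /\ (if b then (L p).2 k else (L p).1 = k)].

Lemma labels_set_eq L L' : labels_set L = labels_set L' -> forall p,
  (L p).1 = (L' p).1 /\ (L p).2 `<=` (L' p).2.
Proof.
move=> LL' p; split=> [|k Lk].
  have [p' [b' [k' [/(pcan_inj pickleK_inv) ee]]]] :
    labels_set L' (pickle (p, false, (L p).1)) by rewrite -LL'; exists p, false, (L p).1.
  by case: ee => <- <- <-.
have [p' [b' [k' [/(pcan_inj pickleK_inv) ee]]]] :
  labels_set L' (pickle (p, true, k)) by rewrite -LL'; exists p, true, k.
by case: ee => <- <- <-.
Qed.

Lemma labels_set_inj : injective labels_set.
Proof.
move=> L L' e; apply/funext => p.
have [e1 s1] := labels_set_eq e p; have [_ s2] := labels_set_eq (esym e) p.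
by case: (L p) (L' p) e1 s1 s2 => [a A] [a' A'] /= -> s1 s2; congr pair; exact/seteqP.
Qed.

Section BorelCount.
Variables (R : realType) (X : zmodType) (d : X -> X -> R).
Hypotheses (d_metric : is_metric d) (d_sep : d_separable d).

Lemma open_countable_basis : exists basis : nat -> set X, forall U, d_open d U ->
  U = \bigcup_(n in [set n | basis n `<=` U]) basis n.
Proof.
case: d_metric => _ [dsym dtri]; case: d_sep => D [cD dense].
have [enc [_ encinj]] := card_le_injects 0%N cD.
pose basis n : set X := [set y | exists q (r : rat),
  [/\ D q, n = pickle (enc q, r) & d q y < ratr r]].
exists basis => U oU; apply/seteqP; split=> [y Uy|y [n sub /sub] //].
have [e [e0 ballU]] := oU y Uy.
have [q [Dq dyq]] := dense y (e / 3) ltac:(lra).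
have [r] := @rat_in_itvoo R (e / 3) (e * 2 / 3) ltac:(lra).
rewrite in_itv /= => /andP [r1 r2].
exists (pickle (enc q, r)); last by exists q, r; split=> //; rewrite dsym; lra.
move=> z [q' [r' [Dq' /(pcan_inj pickleK_inv) [/encinj eqq <-] dz]]].
rewrite -(eqq Dq Dq') in dz; apply: ballU => /=.
have := dtri y q z; lra.
Qed.

Lemma borel_injects : injects [set A | borel d A] [set: set nat].
Proof.
have [basis openE] := open_countable_basis.
have has_code A : borel d A -> exists c, code_set basis c = A.
  elim=> [U oU|A' _ [c e]|F _ IH].
  - by exists (CodeOpen [set n | basis n `<=` U]); rewrite /= -openE.
  - by exists (CodeCompl c); rewrite /= e.
  - have /choice [G HG] := IH; exists (CodeUnion G) => /=.
    by congr bigcup; apply/funext => n; rewrite HG.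
have /choice [c Hc] : forall A, exists c, borel d A -> code_set basis c = A.
  move=> A; have [/has_code [c e]|nbA] := pselect (borel d A); first by exists c.
  by exists (CodeOpen set0).
exists (labels_set \o code_label \o c); split=> // A A' bA bA' /labels_set_inj /code_label_inj e.
by rewrite -(Hc A bA) -(Hc A' bA') e.
Qed.

End BorelCount.

Lemma borel_setT (R : realType) (X : zmodType) (d : X -> X -> R) : borel d [set: X].
Proof. by apply: borel_open => x _; exists 1%R; split. Qed.

Lemma borelD (R : realType) (X : zmodType) (d : X -> X -> R) (A B : set X) :
  borel d A -> borel d B -> borel d (A `\` B).
Proof.
move=> bA bB; have -> : A `\` B = ~` \bigcup_n (if n is 0%N then ~` A else B).
  apply/seteqP; split=> [x [Ax nBx] [[|n] _ //]|x h].
  by split=> [|Bx]; apply: contrapT => h'; apply: h; [exists 0%N | exists 1%N].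
by apply/borel_compl/borel_cunion => -[|n] //; apply: borel_compl.
Qed.

Lemma sigma_idealU (X : zmodType) (I : set (set X)) (A B : set X) :
  sigma_ideal I -> I A -> I B -> I (A `|` B).
Proof.
move=> [_ sI] IA IB; have -> : A `|` B = \bigcup_n (if n is 0%N then A else B).
  by apply/seteqP; split=> [x [Ax|Bx]|x [[|n] _ ?]]; by [exists 0%N | exists 1%N | left | right].
by apply: sI => -[].
Qed.

Section Construction.
Variables (R : realType) (X : zmodType) (K : Type).
Variables (borelP : set X -> Prop) (ideal : set (set X)).
Hypothesis ideal_big : forall B : set X, borelP B -> ~ ideal B ->
  forall D : set (set X), D `<=` ideal -> D #<= [set: R] -> ~ ([set: R] #<= D) ->
  (B `\` \bigcup_(A in D) A) #= [set: R].
Hypotheses (ideal_single : forall x, ideal [set x]) (ideal_proper : ~ ideal setT).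
Hypothesis borelT : borelP setT.
Variable k0 : K.
Hypotheses (K_R : injects [set: K] [set: R]) (R_K : ~ injects [set: R] [set: K]).

Lemma ideal_big_injects B (D : set (set X)) : borelP B -> ~ ideal B -> D `<=` ideal ->
  ~ injects [set: R] D -> injects [set: R] (B `\` \bigcup_(A in D) A).
Proof.
move=> bB IB DI RD; have [DR|/RD //] := injects_total set0 0 D [set: R].
have RD' : ~ ([set: R] #<= D) by move/(card_le_injects set0).
by case/card_eqPle: (ideal_big bB IB DI (injects_card_le DR) RD') => _ /(card_le_injects 0).
Qed.

Lemma avoid_small (B Q : set X) : borelP B -> ~ ideal B -> ~ injects [set: R] Q ->
  exists g : K -> X, injective g /\ forall k, B (g k) /\ ~ Q (g k).
Proof.
move=> bB IB RQ; pose D := [set [set q] | q in Q].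
have RD : ~ injects [set: R] D by move/injects_trans/(_ (injects_image 0 _ Q)).
have DI : D `<=` ideal by move=> _ [q _ <-].
have [g [gB ginj]] := injects_trans K_R (ideal_big_injects bB IB DI RD).
exists g; split=> [k k' /(ginj _ _ Logic.I Logic.I) //|k]; have [Bg nDg] := gB k Logic.I.
by split=> // Qg; apply: nDg; exists [set g k] => //; exists (g k).
Qed.

Lemma translate_avoid (E Q : set X) : E #= [set: K] -> ~ injects [set: R] Q ->
  exists t, forall e, E e -> ~ Q (e + t).
Proof.
move=> /card_eqPle [/(card_le_injects k0) EK _] RQ.
pose D := [set [set p.1 - p.2] | p in Q `*` E].
have RD : ~ injects [set: R] D.
  move=> RD; apply: (not_injects_setX (nat_injects_real R) 0 k0 RQ R_K).
  apply: injects_trans RD (injects_trans (injects_image (0, 0) _ _) _).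
  exact: injectsX (injects_refl Q) EK.
have DI : D `<=` ideal by move=> _ [p _ <-]; apply: ideal_single.
have [f [fT _]] := ideal_big_injects borelT ideal_proper DI RD.
have [_ nDt] := fT 0 Logic.I; exists (f 0) => e Ee Qet; apply: nDt.
by exists [set e + f 0 - e]; [exists (e + f 0, e) | rewrite /= addrC addKr].
Qed.

Definition shift_closure (h : X) (P : set X) : set X :=
  [set x | P x \/ P (x - h) \/ P (x + h)].

Lemma shift_closure_small h (P : set X) : ~ injects [set: R] P ->
  ~ injects [set: R] (shift_closure h P).
Proof.
move=> RP; pose shift (p : X * option bool) :=
  if p.2 is Some b then (if b then p.1 + h else p.1 - h) else p.1.
have sub : shift_closure h P `<=` shift @` (P `*` [set: option bool]).
  move=> x [Px|[Px|Px]]; first by exists (x, None).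
    by exists (x - h, Some true); rewrite /shift /= ?subrK.
  by exists (x + h, Some false); rewrite /shift /= ?addrK.
have Rob : ~ injects [set: R] [set: option bool].
  by apply: (finite_not_injects (nat_injects_real R)); exact: finite_finset.
move=> RQ; apply: (not_injects_setX (nat_injects_real R) 0 None RP Rob).
exact: injects_trans RQ (injects_trans (injects_sub sub) (injects_image (0, None) _ _)).
Qed.

(* The two kinds of task of the construction: [(true, A)] asks for a point of
   the Borel set [A] in every piece, [(false, E)] for a translate of [E] that
   selects one point from every piece. *)
Definition task (tau : bool * set X) :=
  if tau.1 then borelP tau.2 /\ ~ ideal tau.2 else tau.2 #= [set: K].

Variables (lt : R -> R -> Prop) (J : bool * set X -> R).
Hypotheses (ltwo : strict_well_order lt)
  (J_inj : forall tau tau', task tau -> task tau' -> J tau = J tau' -> tau = tau')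
  (J_short : forall tau, task tau -> short_prefix lt (J tau)).

Definition chosen (H : set (R * (K -> X))) : set X :=
  [set x | exists p, H p /\ exists k, x = p.2 k].

Definition step_spec (h : X) (a : R) (H : set (R * (K -> X))) (g : K -> X) :=
  [/\ injective g, forall k, ~ shift_closure h (chosen H) (g k),
      forall A, task (true, A) -> J (true, A) = a -> forall k, A (g k) &
      forall E, task (false, E) -> J (false, E) = a -> exists t, range g = translate E t].

Lemma step_spec_exists h a H : ~ injects [set: R] (chosen H) ->
  exists g, step_spec h a H g.
Proof.
move=> /(shift_closure_small (h:=h)); set Q := shift_closure h _ => RQ.
have J_other tau tau' : task tau -> task tau' -> J tau = a -> J tau' = a -> tau = tau'.
  by move=> t t' <- e; apply: J_inj.
have [[A [tA JA]]|nA] := pselect (exists A, task (true, A) /\ J (true, A) = a).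
  have [g [ginj gA]] := avoid_small tA.1 tA.2 RQ.
  exists g; split=> // [k|A' tA' JA'|E tE JE]; first by case: (gA k).
    by case: (J_other _ _ tA tA' JA JA') => <- k; case: (gA k).
  by case: (J_other _ _ tA tE JA JE).
have [[E [tE JE]]|nE] := pselect (exists E, task (false, E) /\ J (false, E) = a).
  have [phi [phiE phiinj phisurj]] := card_eq_bijection 0 (card_esym tE).
  have [t Qt] := translate_avoid tE RQ.
  exists (fun k => phi k + t).
  split=> [k k' /addIr /(phiinj _ _ Logic.I Logic.I) //|k|A tA JA|E' tE' JE'].
  - exact: Qt (phiE k Logic.I).
  - by case: (J_other _ _ tA tE JA JE).
  have [<-] := J_other _ _ tE tE' JE JE'; exists t; apply/seteqP; split=> x.
    by move=> [k _ <-]; exists (phi k) => //; apply: phiE.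
  by move=> [e Ee <-]; have [k _ <-] := phisurj e Ee; exists k.
have [g [ginj gT]] := avoid_small borelT ideal_proper RQ.
exists g; split=> // [k|A tA JA|E tE JE]; first by case: (gT k).
- by case: nA; exists A.
- by case: nE; exists E.
Qed.

Lemma chosen_small a H : short_prefix lt a -> functional H ->
  gdom H = [set b | lt b a] -> ~ injects [set: R] (chosen H).
Proof.
move=> Sa Hf domH; have /choice [hv Hhv] : forall b, exists v, gdom H b -> H (b, v).
  by move=> b; have [[v Hv]|nb] := pselect (gdom H b); [exists v | exists (fun=> 0)].
have sub : chosen H `<=` (fun p => hv p.1 p.2) @` ([set b | lt b a] `*` [set: K]).
  move=> x [[b v] [Hbv [k ->]]]; have db : gdom H b by exists v.
  exists (b, k); first by split=> //; move: db; rewrite domH.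
  by rewrite /= (Hf _ _ _ (Hhv b db) Hbv).
move=> RH; apply: (not_injects_setX (nat_injects_real R) 0 k0 Sa R_K).
exact: injects_trans RH (injects_trans (injects_sub sub) (injects_image (0, k0) _ _)).
Qed.

Lemma step_recursion (h : X) : exists G : set (R * (K -> X)),
  [/\ functional G, gdom G = short_prefix lt &
      forall a g, G (a, g) -> step_spec h a (below lt G a) g].
Proof.
apply: transfinite_recursion => //; first exact: short_prefix_down.
by move=> a H Sa Hf domH; apply: step_spec_exists; exact: chosen_small Sa Hf domH.
Qed.

Section Family.
Variables (h : X) (G : set (R * (K -> X))).
Hypotheses (h0 : h <> 0) (G_fun : functional G) (G_dom : gdom G = short_prefix lt)
  (G_step : forall a g, G (a, g) -> step_spec h a (below lt G a) g).

Definition piece (k : K) : set X := [set x | exists p, G p /\ x = p.2 k].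

Lemma earlier_chosen a g b g' k : G (a, g) -> G (b, g') -> lt a b ->
  chosen (below lt G b) (g k).
Proof. by move=> Ga Gb ab; exists (a, g); split; [split | exists k]. Qed.

Lemma chosen_once a g b g' k k' : G (a, g) -> G (b, g') -> g k = g' k' ->
  a = b /\ k = k'.
Proof.
move=> Ga Gb e; case: ltwo => _ _ lttri _.
case: (lttri a b) => [ab|[eab|ba]].
- by have [_ nQ _ _] := G_step Gb; case: (nQ k'); left; rewrite -e; exact: earlier_chosen Ga Gb ab.
- move: Ga; rewrite eab => Gb'; have eg := G_fun Gb' Gb; subst g'.
  by have [ginj _ _ _] := G_step Gb; split=> //; exact: ginj e.
- by have [_ nQ _ _] := G_step Ga; case: (nQ k); left; rewrite e; exact: earlier_chosen Gb Ga ba.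
Qed.

Lemma piece_shift_free k x : piece k x -> ~ piece k (h + x).
Proof.
move=> [[a g] [Ga ->]] [[b g'] [Gb /= e]]; case: ltwo => _ _ lttri _.
case: (lttri a b) => [ab|[eab|ba]].
- have [_ nQ _ _] := G_step Gb; apply: (nQ k); right; left.
  by rewrite -e addrC addKr; exact: earlier_chosen Ga Gb ab.
- move: Ga; rewrite eab => Ga; have eg := G_fun Ga Gb; subst g'.
  by apply: h0; apply: (@addIr _ (g k)); rewrite add0r e.
- have [_ nQ _ _] := G_step Ga; apply: (nQ k); right; right.
  by rewrite addrC e; exact: earlier_chosen Gb Ga ba.
Qed.

Lemma piece_disjoint i j : i <> j -> piece i `&` piece j = set0.
Proof.
move=> ij; apply/seteqP; split=> // x [[[a g] [Ga ->]] [[b g'] [Gb e]]].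
by case: ij; exact: (chosen_once Ga Gb e).2.
Qed.

Lemma piece_meets A k : task (true, A) -> exists x, A x /\ piece k x.
Proof.
move=> tA; have [g Gg] : gdom G (J (true, A)) by rewrite G_dom; apply: J_short.
have [_ _ gA _] := G_step Gg.
by exists (g k); split; [exact: gA | exists (J (true, A), g)].
Qed.

Lemma piece_translate E : task (false, E) -> exists t,
  translate E t `<=` \bigcup_(B in range piece) B /\
  forall B, range piece B -> exists x, translate E t `&` B = [set x].
Proof.
move=> tE; have [g Gg] : gdom G (J (false, E)) by rewrite G_dom; apply: J_short.
have [_ _ _ gE] := G_step Gg; have [t et] := gE E tE erefl.
have gpiece k : piece k (g k) by exists (J (false, E), g).
exists t; split=> [y|_ [k _ <-]]; first by rewrite -et => -[k _ <-]; exists (piece k).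
exists (g k); apply/seteqP; split=> [y [Ety [[b g'] [Gb ey]]]|y ->].
  move: Ety; rewrite -et => -[k' _ ek'].
  have [_ ekk] := chosen_once Gg Gb (etrans ek' ey).
  by rewrite -ek' ekk.
by split; [rewrite -et; exists k | exact: gpiece].
Qed.

Lemma piece_card : range piece #= [set: K].
Proof.
apply: injects_card_eq.
  have /choice [f Hf] : forall S, exists k, range piece S -> piece k = S.
    move=> S; have [[k _ <-]|nS] := pselect (range piece S); first by exists k.
    by exists k0 => /nS.
  by exists f; split=> // S S' hS hS' e; rewrite -(Hf S hS) -(Hf S' hS') e.
exists piece; split=> [k _|i j _ _ e]; first by exists k.
apply: contrapT => /piece_disjoint; rewrite -e setIid => Ei.
by have [x [_ /=]] := piece_meets i (conj borelT ideal_proper); rewrite Ei.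
Qed.

Lemma piece_S_covering : kappa_S_covering K (range piece).
Proof.
split; [|split=> [|E EK]]; last exact: piece_translate.
- move=> _ _ [i _ <-] [j _ <-] ne; apply: piece_disjoint => eij; apply: ne; by rewrite eij.
- exact: piece_card.
Qed.

Lemma piece_not_two_covering k : ~ two_covering (piece k).
Proof.
move=> cover; have [|x sub] := cover [set 0; h].
  apply: injects_card_eq.
    exists (fun x => x == h); split=> // x y [] -> [] -> //=; rewrite eqxx.
      by move/eqP/esym.
    by move/esym/eqP.
  exists (fun b : bool => if b then h else 0).
  by split=> [[] _|[] [] _ _ //= e]; by [right | left | case: h0].
apply: (piece_shift_free (x := x) (k := k)).
  by rewrite -[x]add0r; apply: sub; exists 0 => //; left.
by apply: sub; exists h => //; right.
Qed.

Lemma piece_completely_nonmeasurable k k' : k <> k' ->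
  (forall A B, borelP A -> borelP B -> borelP (A `\` B)) ->
  sigma_ideal ideal -> has_borel_base borelP ideal ->
  completely_nonmeasurable borelP ideal (piece k).
Proof.
move=> kk' borelD' idealS base A bA IA.
have meetD C : borelP C -> ideal C -> forall j, exists x, (A `\` C) x /\ piece j x.
  move=> bC IC j; apply: piece_meets; split; first exact: borelD'.
  move=> IAC; apply: IA; apply: idealS.1 (sigma_idealU idealS IAC IC) _ => x Ax.
  by have [Cx|nCx] := pselect (C x); [right | left].
split=> [/base [C [bC [IC sC]]]|/base [C [bC [IC sC]]]].
  by have [x [[Ax nCx] Bx]] := meetD C bC IC k; apply/nCx/sC.
have [x [[Ax nCx] Bx]] := meetD C bC IC k'; apply/nCx/sC; split=> // Bkx.
by have /seteqP [/(_ x (conj Bkx Bx))] := piece_disjoint kk'.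
Qed.

End Family.

Lemma pieces_exist (h : X) (k1 : K) : h <> 0 -> k0 <> k1 ->
  (forall A B, borelP A -> borelP B -> borelP (A `\` B)) ->
  sigma_ideal ideal -> has_borel_base borelP ideal ->
  exists B : K -> set X,
    [/\ forall i j, i <> j -> B i `&` B j = set0,
        forall i, completely_nonmeasurable borelP ideal (B i),
        forall i, ~ two_covering (B i) & kappa_S_covering K (range B)].
Proof.
move=> h0 k01 borelD' idealS base; have [G [Gf Gd Gs]] := step_recursion h.
exists (piece G); split=> [|i|i|]; first exact: piece_disjoint Gf Gs.
- have [->|ik0] := pselect (i = k0).
    exact: (piece_completely_nonmeasurable Gf Gd Gs k01 borelD' idealS base).
  exact: (piece_completely_nonmeasurable Gf Gd Gs ik0 borelD' idealS base).
- exact: (piece_not_two_covering h0 Gf Gs).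
- exact: (piece_S_covering Gf Gd Gs).
Qed.

End Construction.

Lemma tasks_injects (R : realType) (X : zmodType) (d : X -> X -> R)
    (ideal : set (set X)) (K : Type) :
  is_metric d -> d_separable d -> [set: X] #<= [set: R] -> [set: set K] #= [set: R] ->
  injects [set tau | task K (borel d) ideal tau] [set: R].
Proof.
move=> d_metric d_sep /(card_le_injects 0) X_R KR.
have [K_inf _ _] := continuum_exponent KR.
case/card_eqPle: KR => /(card_le_injects 0) PK_R /(card_le_injects set0) R_PK.
have KK : injects [set: K * K] [set: K].
  by apply: injects_trans _ (injects_square K_inf); apply: injects_sub.
apply: (@tagged_injects R _ [set A | borel d A /\ ~ ideal A] [set E | E #= [set: K]]).
  have sub : [set A | borel d A /\ ~ ideal A] `<=` [set A | borel d A] by move=> A [].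
  apply: injects_trans (injects_sub sub) (injects_trans (borel_injects d_metric d_sep) _).
  exact: injects_trans (injects_powerset K_inf) PK_R.
apply: injects_trans (card_eq_sets_injects 0 (injects_trans X_R R_PK)) _.
exact: injects_trans (injects_powerset KK) PK_R.
Qed.

Lemma nonzero_of_uncountable (X : zmodType) : ~ countable [set: X] -> exists h : X, h <> 0.
Proof.
move=> X_unc; apply: contrapT => /forallNP nh; apply: X_unc.
rewrite (_ : [set: X] = [set 0]); first exact: countable1.
by apply/seteqP; split=> // x _; apply: contrapT; apply: nh.
Qed.

Theorem mainTheorem11 (R : realType) (X : zmodType) (d : X -> X -> R)
  (I : set (set X)) (K : Type) :
  abelian_polish_group_complete_metric d ->
  ~ countable [set: X] ->
  sigma_ideal I -> ideal_is_proper I -> translation_invariant I ->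
  contains_singletons I -> has_borel_base (borel d) I ->
  (forall B : set X, borel d B -> ~ I B ->
     forall D : set (set X), D `<=` I ->
       D #<= [set: R] -> ~ ([set: R] #<= D) ->
       (B `\` \bigcup_(A in D) A) #= [set: R]) ->
  (exists a : R, (exists x y, d x y = a) /\ a <> 0 /\
     forall x, I [set y | d x y = a]) ->
  [set: set K] #= [set: R] ->
  exists B : K -> set X,
    (forall i j, i <> j -> B i `&` B j = set0) /\
    (forall i, completely_nonmeasurable (borel d) I (B i)) /\
    (forall i, ~ two_covering (B i)) /\
    kappa_S_covering K (range B).
Proof.
move=> [d_metric [_ [d_sep _]]] X_unc I_sigma I_proper _ I_single I_base I_big _ KR.
have [[k [_ kinj]] K_R R_K] := continuum_exponent KR.
have k01 : k 0%N <> k 1%N by move/(kinj _ _ Logic.I Logic.I).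
have X_R : [set: X] #<= [set: R].
  have R0 : ~ ([set: R] #<= @set0 (set X)) by move/card_le0P/seteqP => [/(_ 0 Logic.I)].
  have := I_big _ (borel_setT d) I_proper _ (sub0set _) (card_ge0 _ _) R0.
  by rewrite bigcup_set0 setD0 => /card_eqPle [].
have [j [_ jinj]] := tasks_injects I d_metric d_sep X_R KR.
have [lt ltwo] := strict_well_order_exists R.
have [w [wS winj]] := short_prefix_injects ltwo.
have [h h0] := nonzero_of_uncountable X_unc.
have [B [? ? ? ?]] := pieces_exist I_big I_single I_proper (borel_setT d)
  K_R R_K ltwo (J := w \o j) (fun _ _ t t' e => jinj _ _ t t' (winj _ _ Logic.I Logic.I e))
  (fun tau _ => wS _ Logic.I) h0 k01 (@borelD _ _ d) I_sigma I_base.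
by exists B.
Qed.
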